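(* Let $i\geq 3$ be an integer and let $D$ be a strong digraph with $D\in\mathcal{LE}_i$. Then $D$ has a small quasi-kernel, i.e. an independent set $Q\subseteq V(D)$ with $|Q|\leq |V(D)|/2$ such that for every vertex $x\notin Q$ there is a directed path of length $1$ or $2$ from $x$ to some vertex of $Q$.
   Context: All digraphs are finite, without loops or multiple arcs. Paths and cycles are directed; the length of a path or cycle is its number of arcs. A set of vertices is independent if no two distinct vertices of it are joined by an arc. A digraph is strong if for every ordered pair of vertices $x,y$ there is a directed path from $x$ to $y$. For a subdigraph $H$ of a digraph $D$, an ear of $H$ in $D$ is either a directed path in $D$ whose two end vertices lie in $H$ and whose internal vertices do not lie in $H$, or a directed cycle in $D$ having exactly one vertex in $H$. An ear decomposition of a strong digraph $D$ is a sequence $(D_0,D_1,\ldots,D_k)$ of strong subdigraphs of $D$ such that $D_0$ is a directed cycle, $D_{j+1}=D_j\cup P_j$ where $P_j$ is an ear of $D_j$ in $D$ for every $j\in\{0,\ldots,k-1\}$, and $D_k=D$. For an integer $i\geq 1$, $\mathcal{LE}_i$ denotes the family of strong digraphs having an ear decomposition in which every ear has length at least $i$. *)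

(* A digraph is a finite vertex type V with an arc relation
   E : rel V (loopless: irreflexive; a relation has no multiple arcs). *)
From mathcomp Require Import all_boot.
Set Implicit Arguments. Unset Strict Implicit. Unset Printing Implicit Defensive.

Section Digraphs.
Variables (V : finType) (E : rel V).

Definition loopless : Prop := forall x, ~~ E x x.

Definition strong : Prop := forall x y : V, connect E x y.

(* A directed path x :: p (distinct vertices, consecutive arcs in E);
   its length is size p. *)
Definition is_dpath (x : V) (p : seq V) : bool := path E x p && uniq (x :: p).

Definition dpath_arcs (x : V) (p : seq V) : seq (V * V) := zip (x :: p) p.

(* A directed cycle x :: p (distinct vertices, length size p + 1 >= 2). *)
Definition is_dcycle (x : V) (p : seq V) : bool :=
  [&& 0 < size p, path E x (rcons p x) & uniq (x :: p)].

Definition dcycle_arcs (x : V) (p : seq V) : seq (V * V) :=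
  zip (x :: p) (rcons p x).

Definition ear_path (S : {set V}) (x : V) (p : seq V) : bool :=
  [&& is_dpath x p, 0 < size p, x \in S, last x p \in S &
      all (fun v => v \notin S) (behead (belast x p))].

Definition ear_cycle (S : {set V}) (x : V) (p : seq V) : bool :=
  is_dcycle x p && (count (mem S) (x :: p) == 1).

(* LE_reach i S A : (S, A) (vertex set, arc set) is some D_j of an ear
   decomposition starting with a directed cycle of D, all of whose ears
   (P_0, ..., P_{j-1}) have length at least i. *)
Inductive LE_reach (i : nat) : {set V} -> {set V * V} -> Prop :=
| LE_start x p : is_dcycle x p ->
    LE_reach i [set v in x :: p] [set e in dcycle_arcs x p]
| LE_add_path S A x p : LE_reach i S A -> ear_path S x p -> i <= size p ->
    LE_reach i (S :|: [set v in x :: p]) (A :|: [set e in dpath_arcs x p])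
| LE_add_cycle S A x p : LE_reach i S A -> ear_cycle S x p -> i <= (size p).+1 ->
    LE_reach i (S :|: [set v in x :: p]) (A :|: [set e in dcycle_arcs x p]).

Definition in_LE (i : nat) : Prop :=
  LE_reach i [set: V] [set e | E e.1 e.2].

Definition independent (Q : {set V}) : Prop :=
  forall x y, x \in Q -> y \in Q -> ~~ E x y.

Definition quasi_kernel (Q : {set V}) : Prop :=
  independent Q /\
  forall x, x \notin Q ->
    exists2 q, q \in Q & (E x q \/ exists z, E x z && E z q).

Definition small_quasi_kernel (Q : {set V}) : Prop :=
  quasi_kernel Q /\ 2 * #|Q| <= #|V|.

End Digraphs.

From mathcomp Require Import all_boot zify.
Set Implicit Arguments. Unset Strict Implicit. Unset Printing Implicit Defensive.

(* Induction along the ear decomposition, keeping a quasi-kernel Q of the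
   current stage D_j with 2|Q| <= |V(D_j)|.  An ear x, u_1, ..., u_k, y adds
   k new vertices whose only arcs are those of the ear, so Q can be extended
   by vertices of the ear alone: take every third u_j counted backwards from
   y, starting at distance 3 from y when y is in Q and at distance 1
   otherwise, and replace u_1 (whose predecessor x may be in Q) by u_2.  This
   adds at most (k - [y \in Q]) / 2 vertices, because ears have length at
   least 3, so that k >= 2 whenever y is not in Q.  The initial cycle through
   x is handled as an ear of the one-vertex digraph {x} with quasi-kernel {x},
   the vertex x being paid for by the term [y \in Q]. *)

Definition reaches2 (T : Type) (R : rel T) (C : {pred T}) (v : T) : Prop :=
  exists2 q, q \in C & (R v q \/ exists z, R v z && R z q).

Lemma sub_reaches2 (T : Type) (R R' : rel T) (C C' : {pred T}) v :
  subrel R R' -> {subset C <= C'} -> reaches2 R C v -> reaches2 R' C' v.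
Proof.
move=> RR' CC' [q /CC' Cq [/RR' Rvq | [z /andP [/RR' Rvz /RR' Rzq]]]].
  by exists q => //; left.
by exists q => //; right; exists z; rewrite Rvz.
Qed.

Lemma mem_zip (S T : eqType) (s : seq S) (t : seq T) a c :
  (a, c) \in zip s t -> (a \in s) && (c \in t).
Proof.
elim: s t => [|x s IH] [|z t] //=; rewrite !in_cons.
by case/predU1P => [[-> ->]|/IH /andP [-> ->]]; rewrite ?eqxx ?orbT.
Qed.

Lemma take_zip (S T : Type) n (s : seq S) (t : seq T) :
  take n (zip s t) = zip (take n s) (take n t).
Proof. by elim: s n t => [|a s IH] [|n] [|b t] //=; rewrite IH. Qed.

Lemma drop_zip (S T : Type) n (s : seq S) (t : seq T) :
  drop n (zip s t) = zip (drop n s) (drop n t).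
Proof.
by elim: s n t => [|a s IH] [|n] [|b t] //=; rewrite ?IH //; case: (drop _ _).
Qed.

Lemma zip_rot (S T : Type) n (s : seq S) (t : seq T) :
  size s = size t -> zip (rot n s) (rot n t) = rot n (zip s t).
Proof.
by move=> st; rewrite /rot take_zip drop_zip zip_cat // !size_drop st.
Qed.

Section EveryThird.

Variables (T : eqType) (b : bool).
Local Notation gap := (~~ b).*2.

(* A vertex of s is kept when its distance to the end y of the walk, plus
   gap, is a multiple of 3: b says that y is already in the quasi-kernel, and
   then the kept vertices lie at distance 3, 6, ... from y, otherwise at
   distance 1, 4, .... *)
Fixpoint every_third (s : seq T) : seq T :=
  if s is u :: s' then
    if (size s' + gap) %% 3 == 2 then u :: every_third s' else every_third s'
  else [::].

(* The first vertex of an ear is never kept; when every_third would keep it,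
   the second vertex is kept instead. *)
Definition ear_pick (s : seq T) : seq T :=
  if s is _ :: u :: s' then
    if (size s' + gap) %% 3 == 0 then every_third s' else u :: every_third s'
  else [::].

Lemma every_third_sub s : {subset every_third s <= s}.
Proof.
elim: s => //= u s IH v; rewrite in_cons.
by case: ifP => _; [rewrite in_cons => /predU1P [->|/IH ->] | move/IH ->];
  rewrite ?eqxx ?orbT.
Qed.

Lemma ear_pick_sub s : {subset ear_pick s <= s}.
Proof.
case: s => [|u [|v s]] //= w; rewrite !in_cons.
case: ifP => _; first by move/every_third_sub ->; rewrite !orbT.
by rewrite in_cons => /predU1P [->|/every_third_sub ->]; rewrite ?eqxx ?orbT.
Qed.

Lemma size_every_third s : size (every_third s) = (size s + gap) %/ 3.
Proof.
elim: s => [|u s IH] /=; first by case: b.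
by case: ifP => /eqP h; rewrite /= IH; lia.
Qed.

Lemma size_ear_pick s : ~~ b < size s -> 2 * size (ear_pick s) + b <= size s.
Proof.
case: s => [|u [|v s]] //=; first by case: b.
by case: ifP => /eqP h /=; rewrite size_every_third; case: b h => /=; lia.
Qed.

Variables (y : T) (C : {pred T}).
Hypothesis Cy : (y \in C) = b.

Definition selects (s F : seq T) : Prop :=
  {in s, forall v, (v \in C) = (v \in F)}.

Definition walk_rel (x : T) (s : seq T) : rel T :=
  fun a c => (a, c) \in zip (x :: rcons s y) (rcons s y).

Lemma walk_rel_cons x u s a c :
  walk_rel x (u :: s) a c = ((a, c) == (x, u)) || walk_rel u s a c.
Proof. by rewrite /walk_rel /= in_cons. Qed.

Lemma walk_rel_head x s : walk_rel x s x (head y s).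
Proof. by rewrite /walk_rel headI /= mem_head. Qed.

Lemma selects_every_third_behead u s : uniq (u :: s) ->
  selects (u :: s) (every_third (u :: s)) -> selects s (every_third s).
Proof.
case/andP => us _ sel v vs; rewrite sel ?in_cons ?vs ?orbT //=.
by case: ifP => _ //; rewrite in_cons; case: eqP => // vu; rewrite -vu vs in us.
Qed.

Lemma every_third_head s : uniq s -> selects s (every_third s) ->
  (head y s \in C) = ((size s + gap) %% 3 == 0).
Proof.
case: s => [|u s] /=; first by rewrite Cy; case: b.
case/andP => us _ /(_ u (mem_head _ _)) -> /=.
have uF : (u \in every_third s) = false.
  by apply: contraNF us; apply: every_third_sub.
by case: ifP => /eqP h; rewrite ?mem_head ?uF; apply/esym/eqP; lia.
Qed.

Lemma every_third_indep x s : uniq s -> selects s (every_third s) ->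
  ~~ ((x \in C) && (head y s \in C)) ->
  {in C &, forall a c, ~~ walk_rel x s a c}.
Proof.
elim: s x => [|u s IH] x Uus sel xC a c aC cC.
  apply: contra xC; rewrite /walk_rel /= mem_seq1 => /eqP [<- <-].
  by rewrite aC.
rewrite walk_rel_cons negb_or; apply/andP; split.
  by apply: contra xC => /eqP [<- <-]; rewrite aC.
have Us : uniq s by case/andP: Uus.
have sel' := selects_every_third_behead Uus sel.
apply: IH => //.
have := every_third_head Uus sel; have := every_third_head Us sel'.
by rewrite /= => -> ->; apply/negP => /andP [/eqP h1 /eqP h2]; lia.
Qed.

Lemma every_third_absorb x s : uniq s -> selects s (every_third s) ->
  {in s, forall v, v \notin C -> reaches2 (walk_rel x s) C v}.
Proof.
elim: s x => [|u s IH] x // Uus sel v.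
have Us : uniq s by case/andP: Uus.
have sel' := selects_every_third_behead Uus sel.
rewrite in_cons => /predU1P [-> uC | vs vC]; last first.
  apply: sub_reaches2 (IH u Us sel' v vs vC) => // a c h.
  by rewrite walk_rel_cons h orbT.
have := every_third_head Uus sel; rewrite /= (negbTE uC) => /esym/eqP h.
have walk_u : walk_rel x (u :: s) u (head y s).
  by rewrite walk_rel_cons walk_rel_head orbT.
case: s {IH Uus sel} Us sel' h walk_u => [|w s] Us sel' h walk_u.
  by exists y => //; [rewrite Cy; case: b h | left].
case wC: (w \in C); first by exists w => //; left.
have Cs : head y s \in C.
  have := every_third_head Us sel'; rewrite /= wC => /esym/eqP h'.
  have [_ Us'] := andP Us.
  rewrite (every_third_head Us' (selects_every_third_behead Us sel')).
  by move: h => /= h; apply/eqP; lia.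
exists (head y s) => //; right; exists w.
by rewrite walk_u !walk_rel_cons walk_rel_head !orbT.
Qed.

Lemma selects_ear_pick u v s : uniq [:: u, v & s] ->
  selects [:: u, v & s] (ear_pick [:: u, v & s]) ->
  [/\ u \notin C, (v \in C) = ((size s + gap) %% 3 != 0)
    & selects s (every_third s)].
Proof.
rewrite /= in_cons negb_or => /and3P [/andP [uv us] vs _] sel.
have et_u : (u \in every_third s) = false.
  by apply: contraNF us; apply: every_third_sub.
have et_v : (v \in every_third s) = false.
  by apply: contraNF vs; apply: every_third_sub.
split.
- by rewrite sel ?mem_head //=; case: ifP; rewrite ?in_cons ?(negbTE uv) et_u.
- by rewrite sel ?in_cons ?eqxx ?orbT //=; case: ifP; rewrite ?mem_head ?et_v.
- move=> w ws; rewrite sel ?in_cons ?ws ?orbT //=; case: ifP => // _.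
  by rewrite in_cons; case: eqP => // wv; rewrite -wv ws in vs.
Qed.

Lemma ear_pick_indep x s : 0 < size s -> uniq s -> selects s (ear_pick s) ->
  {in C &, forall a c, ~~ walk_rel x s a c}.
Proof.
case: s => [|u [|v s]] // _ Us sel a c aC cC.
  have uC : u \notin C by rewrite sel ?mem_head.
  rewrite /walk_rel /= !in_cons orbF.
  by apply/norP; split; apply: contraNneq uC => -[ha hc]; rewrite -?ha -?hc.
have [uC vC sel'] := selects_ear_pick Us sel.
have Us' : uniq s by case/and3P: Us.
rewrite !walk_rel_cons !negb_or; apply/and3P; split.
- by apply: contraNneq uC => -[_ <-].
- by apply: contraNneq uC => -[<- _].
- apply: every_third_indep aC cC => //.
  by rewrite vC (every_third_head Us' sel'); case: eqP.
Qed.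

Lemma ear_pick_absorb x s : ~~ b < size s -> uniq s -> selects s (ear_pick s) ->
  {in s, forall w, w \notin C -> reaches2 (walk_rel x s) C w}.
Proof.
case: s => [|u [|v s]] // s_gt Us sel w.
  rewrite mem_seq1 => /eqP -> _; exists y; first by rewrite Cy; case: b s_gt.
  by left; rewrite walk_rel_cons walk_rel_head orbT.
have [uC vC sel'] := selects_ear_pick Us sel.
have Us' : uniq s by case/and3P: Us.
have walk_uv : walk_rel x [:: u, v & s] u v.
  by rewrite walk_rel_cons walk_rel_head orbT.
have walk_v : walk_rel x [:: u, v & s] v (head y s).
  by rewrite !walk_rel_cons walk_rel_head !orbT.
have next_v : v \notin C -> head y s \in C.
  by rewrite vC negbK (every_third_head Us' sel').
rewrite !in_cons => /or3P [/eqP -> _ | /eqP -> /next_v Cs | ws wC].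
- case vC' : (v \in C); first by exists v => //; left.
  exists (head y s); first by rewrite next_v ?vC'.
  by right; exists v; rewrite walk_uv walk_v.
- by exists (head y s) => //; left.
- apply: sub_reaches2 (every_third_absorb v Us' sel' ws wC) => // a c h.
  by rewrite !walk_rel_cons h !orbT.
Qed.

End EveryThird.

Section Subdigraphs.

Variable V : finType.
Implicit Types (S Q U F : {set V}) (A B : {set V * V}) (x y : V) (p us : seq V).

Lemma dcycle_arcsE x p : dcycle_arcs x p = dpath_arcs x (rcons p x).
Proof.
rewrite /dpath_arcs -rcons_cons -cats1 -[rcons p x]cats0.
by rewrite zip_cat ?size_rcons // !cats0.
Qed.

Lemma mem_dpath_arcs x p a c :
  (a, c) \in dpath_arcs x p -> (a \in x :: p) && (c \in x :: p).
Proof. by case/mem_zip/andP => -> cp; rewrite in_cons cp orbT. Qed.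

Lemma mem_dcycle_arcs x p a c :
  (a, c) \in dcycle_arcs x p -> (a \in x :: p) && (c \in x :: p).
Proof. by case/mem_zip/andP => ->; rewrite mem_rcons. Qed.

Lemma mem_dcycle_arcs_rot x p j w s : rot j (x :: p) = w :: s ->
  dcycle_arcs x p =i dcycle_arcs w s.
Proof.
move=> rot_xp e; rewrite /dcycle_arcs -!rot1_cons -rot_xp rot_rot.
by rewrite zip_rot ?size_rot // mem_rot.
Qed.

Lemma card_setU_seq S us : uniq us -> [disjoint us & S] ->
  #|S :|: [set v in us]| = #|S| + size us.
Proof.
move=> /card_uniqP <- usS; rewrite -[#|us|]cardsE; apply/eqP.
by rewrite (leq_card_setU _ _).2 disjoint_sym (eq_disjoint (in_set _)).
Qed.

Definition arc_rel A : rel V := fun a c => (a, c) \in A.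

Definition sub_quasi_kernel S A Q : Prop :=
  [/\ Q \subset S, independent (arc_rel A) Q
    & {in S :\: Q, forall v, reaches2 (arc_rel A) Q v}].

Lemma sub_quasi_kernelU S A Q U B F :
  A \subset setX S S -> [disjoint U & S] -> F \subset U ->
  sub_quasi_kernel S A Q -> independent (arc_rel B) (Q :|: F) ->
  {in U :\: F, forall v, reaches2 (arc_rel B) (Q :|: F) v} ->
  sub_quasi_kernel (S :|: U) (A :|: B) (Q :|: F).
Proof.
move=> AS US FU [QS indQ absQ] indB absB.
have FS v : v \in F -> (v \in S) = false.
  by move/(subsetP FU); apply: disjointFr.
have subA : subrel (arc_rel A) (arc_rel (A :|: B)).
  by move=> a c; rewrite /arc_rel in_setU => ->.
have subB : subrel (arc_rel B) (arc_rel (A :|: B)).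
  by move=> a c; rewrite /arc_rel in_setU => ->; rewrite orbT.
split; first exact: setUSS.
  move=> a c aQF cQF; rewrite /arc_rel in_setU negb_or indB // andbT.
  apply/negP => ac; have /setXP [aS cS] := subsetP AS _ ac.
  have inQ w : w \in Q :|: F -> w \in S -> w \in Q by case/setUP => // /FS ->.
  by move: (indQ a c (inQ a aQF aS) (inQ c cQF cS)); rewrite /arc_rel ac.
move=> v; rewrite !inE negb_or => /andP [/andP [vQ vF] /orP [vS | vU]].
  apply: sub_reaches2 subA _ (absQ v _); last by rewrite inE vQ vS.
  by move=> w; rewrite inE => ->.
by apply: sub_reaches2 subB _ (absB v _) => //; rewrite inE vF vU.
Qed.

Lemma sub_quasi_kernel_ear S A Q x y us :
  A \subset setX S S -> sub_quasi_kernel S A Q -> y \in S -> uniq us ->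
  [disjoint us & S] -> (y \notin Q) < size us ->
  exists2 Q', sub_quasi_kernel (S :|: [set v in us])
                (A :|: [set e in dpath_arcs x (rcons us y)]) Q'
            & 2 * #|Q'| + (y \in Q) <= 2 * #|Q| + size us.
Proof.
move=> AS sQ yS Uus usS us_gt; have [QS _ _] := sQ.
set F := ear_pick (y \in Q) us; set Q' := Q :|: [set v in F].
have selF : selects Q' us F.
  move=> v vus; rewrite in_setU in_set.
  by rewrite (contraFF (subsetP QS v) (disjointFr usS vus)).
have yQ' : (y \in Q') = (y \in Q).
  rewrite in_setU in_set; suff -> : (y \in F) = false by rewrite orbF.
  by apply: contraTF yS => /ear_pick_sub /(disjointFr usS) ->.
exists Q'.
  apply: sub_quasi_kernelU => //.
  - by rewrite (eq_disjoint (in_set _)).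
  - by apply/subsetP => v; rewrite !in_set; apply: ear_pick_sub.
  - move=> a c aQ' cQ'; rewrite /arc_rel in_set.
    by apply: (ear_pick_indep yQ') aQ' cQ' => //; apply: leq_ltn_trans us_gt.
  - move=> v; rewrite in_setD !in_set => /andP [vF vus].
    apply: sub_reaches2 (ear_pick_absorb yQ' x us_gt Uus selF vus _) => //.
      by move=> a c; rewrite /arc_rel in_set.
    by rewrite selF.
have cardQ' : #|Q'| <= #|Q| + size F.
  by rewrite (leq_trans (leq_card_setU _ _).1) // leq_add2l cardsE card_size.
have := size_ear_pick us_gt; rewrite -/F; move: cardQ'; clearbody Q' F.
by case: (y \in Q) => /=; lia.
Qed.

End Subdigraphs.

Section EarDecomposition.

Variables (V : finType) (E : rel V).
Implicit Types (S : {set V}) (A : {set V * V}) (x : V) (p : seq V).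

Lemma LE_reach_arcs i S A : LE_reach E i S A -> A \subset setX S S.
Proof.
elim=> {S A} [x p _ | S A x p _ AS _ _ | S A x p _ AS _ _];
  apply/subsetP => -[a c]; rewrite ?in_setU in_set.
- by move/mem_dcycle_arcs; rewrite in_setX !in_set.
- case/orP => [/(subsetP AS) | /mem_dpath_arcs];
    by rewrite !in_setX !in_setU !in_set => /andP [-> ->]; rewrite ?orbT.
- case/orP => [/(subsetP AS) | /mem_dcycle_arcs];
    by rewrite !in_setX !in_setU !in_set => /andP [-> ->]; rewrite ?orbT.
Qed.

Lemma ear_path_walk S x p : ear_path E S x p ->
  exists us y, [/\ p = rcons us y, y \in S, uniq us, [disjoint us & S]
    & S :|: [set v in x :: p] = S :|: [set v in us]].
Proof.
case/lastP: p => [|us y]; first by case/and5P.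
case/and5P => /andP [_ Uxp] _ xS; rewrite last_rcons belast_rcons /= => yS usS.
exists us, y; split => //.
- by move: Uxp; rewrite cons_uniq rcons_uniq => /and3P [].
- by rewrite disjoint_has -all_predC.
apply/setP => v; rewrite !in_setU !in_set in_cons mem_rcons in_cons.
case: (v =P x) => [->|_]; first by rewrite xS.
by case: (v =P y) => [->|_]; rewrite ?yS.
Qed.

Lemma ear_cycle_walk S x p : ear_cycle E S x p ->
  exists2 w, w \in S & exists s, [/\ uniq s, [disjoint s & S], size s = size p,
    S :|: [set v in x :: p] = S :|: [set v in s]
    & [set e in dcycle_arcs x p] = [set e in dpath_arcs w (rcons s w)]].
Proof.
case/andP => /and3P [_ _ Uxp] /eqP count1.
have /hasP [w wxp wS] : has [in S] (x :: p) by rewrite has_count count1.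
case: (rot_to wxp) => j s rot_xp.
have mem_ws : x :: p =i w :: s by move=> v; rewrite -rot_xp mem_rot.
have /andP [ws Us] : uniq (w :: s) by rewrite -rot_xp rot_uniq.
have perm_ws : perm_eq (w :: s) (x :: p) by rewrite -rot_xp perm_rot.
exists w => //; exists s; split => //.
- move: count1; rewrite -(permP perm_ws) /= wS add1n => -[/eqP].
  by rewrite eqn0Ngt -has_count disjoint_has.
- by have /= [] := perm_size perm_ws.
- apply/setP => v; rewrite !in_setU !in_set mem_ws in_cons.
  by case: (v =P w) => [->|_]; rewrite ?wS.
by apply/setP => e; rewrite !in_set -dcycle_arcsE (mem_dcycle_arcs_rot rot_xp).
Qed.

Lemma LE_reach_small_quasi_kernel i S A : 3 <= i -> LE_reach E i S A ->
  exists2 Q, sub_quasi_kernel S A Q & 2 * #|Q| <= #|S|.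
Proof.
move=> i3; elim=> {S A} [x p cyc | S A x p stage [Q sQ HQ] ear ip
                           | S A x p stage [Q sQ HQ] ear ip].
- have /and3P [p_gt _ Uxp] := cyc; have /andP [xp Up] := Uxp.
  have sQx : sub_quasi_kernel [set x] set0 [set x].
    by split => // [a c _ _|v]; rewrite /arc_rel ?setDv in_set0.
  have px : [disjoint p & [set x]].
    rewrite disjoint_has; apply/hasPn => v vp /=; rewrite in_set1.
    by apply: contraNneq xp => <-.
  have p_gt' : (x \notin [set x]) < size p by rewrite set11.
  have [Q' sQ' HQ'] :=
    sub_quasi_kernel_ear x (sub0set _) sQx (set11 x) Up px p_gt'.
  exists Q'.
    have -> : [set v in x :: p] = [set x] :|: [set v in p].
      by apply/setP => v; rewrite !inE.
    by move: sQ'; rewrite dcycle_arcsE set0U.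
  move: HQ'; rewrite set11 cards1 cardsE (card_uniqP Uxp) /=; lia.
- have [us [y [p_eq yS Uus usS ->]]] := ear_path_walk ear.
  have us_gt : (y \notin Q) < size us.
    apply: leq_ltn_trans (leq_b1 _) _.
    by move: ip; rewrite p_eq size_rcons; lia.
  have [Q' sQ' HQ'] :=
    sub_quasi_kernel_ear x (LE_reach_arcs stage) sQ yS Uus usS us_gt.
  by exists Q'; [rewrite p_eq | rewrite card_setU_seq //; lia].
- have [w wS [s [Us sS s_size -> ->]]] := ear_cycle_walk ear.
  have s_gt : (w \notin Q) < size s.
    by apply: leq_ltn_trans (leq_b1 _) _; rewrite s_size; lia.
  have [Q' sQ' HQ'] :=
    sub_quasi_kernel_ear w (LE_reach_arcs stage) sQ wS Us sS s_gt.
  by exists Q' => //; rewrite card_setU_seq //; lia.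
Qed.

End EarDecomposition.

Theorem mainTheorem3 (i : nat) (V : finType) (E : rel V) :
  3 <= i -> loopless E -> strong E -> in_LE E i ->
  exists Q : {set V}, small_quasi_kernel E Q.
Proof.
move=> i3 _ _ LE.
have [Q [_ indQ absQ] HQ] := LE_reach_small_quasi_kernel i3 LE.
have arcsE : arc_rel [set e | E e.1 e.2] =2 E.
  by move=> a c; rewrite /arc_rel inE.
exists Q; split; last by rewrite cardsT in HQ.
split=> [a c aQ cQ | v vQ]; first by rewrite -arcsE; apply: indQ.
apply: sub_reaches2 (absQ v _) => // [a c|]; first by rewrite arcsE.
by rewrite in_setD vQ in_setT.
Qed.
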